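(* Let $\mathbb{C}_1$ and $\mathbb{C}_2$ be locally small categories whose morphisms are all monomorphisms. Assume that for each $i\in\{1,2\}$ and all $A_i,B_i\in\mathrm{Ob}(\mathbb{C}_i)$ the set $\hom_{\mathbb{C}_i}(A_i,B_i)$ is finite and $t_{\mathbb{C}_i}(A_i)$ is finite. Then for all $A_1\in\mathrm{Ob}(\mathbb{C}_1)$ and $A_2\in\mathrm{Ob}(\mathbb{C}_2)$, $$t_{\mathbb{C}_1\times\mathbb{C}_2}(A_1,A_2)\le t_{\mathbb{C}_1}(A_1)\cdot t_{\mathbb{C}_2}(A_2),$$ and consequently $t^\sim_{\mathbb{C}_1\times\mathbb{C}_2}(A_1,A_2)\le t^\sim_{\mathbb{C}_1}(A_1)\cdot t^\sim_{\mathbb{C}_2}(A_2)$.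
   Context: $\mathbb{C}_1\times\mathbb{C}_2$ is the product category. For a category $\mathbb{C}$, $k\ge2$, $t\ge1$ and objects $A,B,C$: $C\to(B)^A_{k,t}$ means that for every $\chi:\hom(A,C)\to\{0,\dots,k-1\}$ there is $w\in\hom(B,C)$ with $|\chi(w\cdot\hom(A,B))|\le t$. $t_{\mathbb{C}}(A)$ is the least positive integer $n$ such that for all $k\ge2$ and all $B$ there is $C$ with $C\to(B)^A_{k,n}$, and $\infty$ if none exists. For $f,f'\in\hom(A,B)$ let $f\sim_A f'$ iff $f'=f\cdot\alpha$ for some $\alpha\in\mathrm{Aut}(A)$, $\binom{B}{A}=\hom(A,B)/{\sim_A}$, and $w\cdot(f/{\sim_A})=(w\cdot f)/{\sim_A}$. $C\overset{\sim}{\to}(B)^A_{k,t}$ means that for every $\chi:\binom{C}{A}\to\{0,\dots,k-1\}$ there is $w\in\hom(B,C)$ with $|\chi(w\cdot\binom{B}{A})|\le t$; $t^\sim_{\mathbb{C}}(A)$ is the least positive $n$ such that for all $k\ge2$ and all $B$ there is $C$ with $C\overset{\sim}{\to}(B)^A_{k,n}$, and $\infty$ otherwise. *)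

From Stdlib Require List.
From mathcomp Require Import all_boot.
Set Implicit Arguments. Unset Strict Implicit. Unset Printing Implicit Defensive.

Record category := Category {
  Ob : Type;
  Hom : Ob -> Ob -> Type;
  comp : forall A B C : Ob, Hom B C -> Hom A B -> Hom A C;
  idm : forall A : Ob, Hom A A;
  comp_assoc : forall (A B C D : Ob) (h : Hom C D) (g : Hom B C) (f : Hom A B),
      comp h (comp g f) = comp (comp h g) f;
  comp_id_l : forall (A B : Ob) (f : Hom A B), comp (idm B) f = f;
  comp_id_r : forall (A B : Ob) (f : Hom A B), comp f (idm A) = f
}.
Arguments comp {c A B C}.
Arguments idm {c}.

Definition all_mono (K : category) : Prop :=
  forall (A B D : Ob K) (h : Hom B D) (f g : Hom A B), comp h f = comp h g -> f = g.

Definition finite_homs (K : category) : Prop :=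
  forall A B : Ob K, exists s : list (Hom A B), forall f : Hom A B, List.In f s.

Section Prod.
Variables C1 C2 : category.
Definition prod_Hom (X Y : Ob C1 * Ob C2) : Type :=
  (Hom X.1 Y.1 * Hom X.2 Y.2)%type.
Definition prod_comp (X Y Z : Ob C1 * Ob C2) (g : prod_Hom Y Z) (f : prod_Hom X Y)
  : prod_Hom X Z := (comp g.1 f.1, comp g.2 f.2).
Definition prod_id (X : Ob C1 * Ob C2) : prod_Hom X X := (idm X.1, idm X.2).
Lemma prod_assoc (A B C D : Ob C1 * Ob C2) (h : prod_Hom C D) (g : prod_Hom B C)
  (f : prod_Hom A B) :
  prod_comp h (prod_comp g f) = prod_comp (prod_comp h g) f.
Proof. by rewrite /prod_comp /= !comp_assoc. Qed.
Lemma prod_id_l (A B : Ob C1 * Ob C2) (f : prod_Hom A B) : prod_comp (prod_id B) f = f.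
Proof. by case: f => f1 f2; rewrite /prod_comp /= !comp_id_l. Qed.
Lemma prod_id_r (A B : Ob C1 * Ob C2) (f : prod_Hom A B) : prod_comp f (prod_id A) = f.
Proof. by case: f => f1 f2; rewrite /prod_comp /= !comp_id_r. Qed.
Definition prod_cat : category :=
  @Category (Ob C1 * Ob C2)%type prod_Hom prod_comp prod_id prod_assoc prod_id_l prod_id_r.
End Prod.

Definition arrows (K : category) (C B A : Ob K) (k t : nat) : Prop :=
  forall chi : Hom A C -> 'I_k,
    exists w : Hom B C, exists S : {set 'I_k},
      #|S| <= t /\ forall f : Hom A B, chi (comp w f) \in S.

Definition ramsey_prop (K : category) (A : Ob K) (n : nat) : Prop :=
  forall k, 2 <= k -> forall B : Ob K, exists C : Ob K, arrows C B A k n.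

(* is_t K A n  <->  t_K(A) = n  (finite).  t_K(A) = oo  <-> no such n. *)
Definition is_t (K : category) (A : Ob K) (n : nat) : Prop :=
  0 < n /\ ramsey_prop A n /\ forall m, 0 < m -> ramsey_prop A m -> n <= m.

Definition is_aut (K : category) (A : Ob K) (a : Hom A A) : Prop :=
  exists b : Hom A A, comp a b = idm A /\ comp b a = idm A.

(* A colouring of binom(C,A) = hom(A,C)/~_A is represented by a colouring of
   hom(A,C) that is constant on ~_A-classes. *)
Definition aut_invariant (K : category) (A C : Ob K) (k : nat)
  (chi : Hom A C -> 'I_k) : Prop :=
  forall (f : Hom A C) (a : Hom A A), is_aut a -> chi (comp f a) = chi f.

Definition arrows_sim (K : category) (C B A : Ob K) (k t : nat) : Prop :=
  forall chi : Hom A C -> 'I_k, aut_invariant chi ->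
    exists w : Hom B C, exists S : {set 'I_k},
      #|S| <= t /\ forall f : Hom A B, chi (comp w f) \in S.

Definition ramsey_prop_sim (K : category) (A : Ob K) (n : nat) : Prop :=
  forall k, 2 <= k -> forall B : Ob K, exists C : Ob K, arrows_sim C B A k n.

Definition is_t_sim (K : category) (A : Ob K) (n : nat) : Prop :=
  0 < n /\ ramsey_prop_sim A n /\ forall m, 0 < m -> ramsey_prop_sim A m -> n <= m.

(** Colour each g : A2 -> C2 by its whole column of colours (chi (f, g))_f, f
    ranging over the finite set hom(A1, C1). Ramsey for A2 yields w2 on whose
    copy of hom(A2, B2) at most t2 columns occur; fix representatives g_1,
    ..., g_t2 of them and colour each f : A1 -> C1 by the tuple (chi (f, w2
    g_j))_j. Ramsey for A1 yields w1 on whose copy of hom(A1, B1) at most t1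
    tuples occur. Since chi (w1 f, w2 g) is the j-th entry of the tuple of w1
    f whenever w2 g has the column of w2 g_j, at most t1 t2 colours occur on
    (w1, w2) . hom((A1, A2), (B1, B2)). Both recolourings stay constant on
    ~-classes because (a1, id) and (id, a2) are automorphisms of (A1, A2), so
    the same argument bounds t~. *)
From Stdlib Require Import ClassicalEpsilon.
From mathcomp Require Import all_boot.
Set Implicit Arguments. Unset Strict Implicit. Unset Printing Implicit Defensive.

Lemma exists_least_pos_le (R : nat -> Prop) N : 0 < N -> R N ->
  exists n, (0 < n /\ R n /\ forall m, 0 < m -> R m -> n <= m) /\ n <= N.
Proof.
move=> N_gt0 RN.
pose p : pred nat := fun m =>
  if excluded_middle_informative (0 < m /\ R m) then true else false.
have pP m : p m <-> 0 < m /\ R m.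
  by rewrite /p; case: excluded_middle_informative.
have [|n /pP [n_gt0 Rn] n_min] := @ex_minnP p; first by exists N; apply/pP.
exists n; split; last exact/n_min/pP.
by do 2!split=> //; move=> m m_gt0 Rm; apply/n_min/pP.
Qed.

Lemma exists_partial_inverse (X Y : Type) (F : X -> Y) :
  exists r : Y -> option X, forall x, omap F (r (F x)) = Some (F x).
Proof.
have [r rP] : exists r : Y -> option X,
    forall y x, F x = y -> omap F (r y) = Some y.
  apply: (choice (fun y o => forall x, F x = y -> omap F o = Some y)) => y.
  case: (excluded_middle_informative (exists x, F x = y)).
    by move=> [x Fx]; exists (Some x) => ? _; rewrite /= Fx.
  by move=> noF; exists None => x Fx; case: noF; exists x.
by exists r => x; apply: rP.
Qed.

Lemma bounded_image_representatives (X : Type) (Y : finType) (F : X -> Y)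
    (S : {set Y}) n :
  #|S| <= n -> (forall x, F x \in S) ->
  exists rep : 'I_n -> option X,
    forall x, exists j, omap F (rep j) = Some (F x).
Proof.
move=> le_Sn FS; have [r rF] := exists_partial_inverse F.
exists (fun j => obind r (onth (enum S) j)) => x.
have idx_lt : index (F x) (enum S) < n.
  by apply: leq_trans le_Sn; rewrite cardE index_mem mem_enum.
exists (Ordinal idx_lt).
by rewrite onthE (nth_map (F x)) ?nth_index ?index_mem ?mem_enum //= rF.
Qed.

Lemma leq_imset2_card (aT1 aT2 rT : finType) (f : aT1 -> aT2 -> rT)
    (A1 : {set aT1}) (A2 : {set aT2}) :
  #|f @2: (A1, A2)| <= #|A1| * #|A2|.
Proof. by rewrite curry_imset2X -cardsX leq_imset_card. Qed.

Lemma finite_homs_index (K : category) : finite_homs K -> forall A B : Ob K,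
  exists n (e : 'I_n -> Hom A B) (i : Hom A B -> 'I_n), cancel i e.
Proof.
move=> finK A B; have [s s_all] := finK A B.
have idx f : exists j : 'I_(size s), tnth (in_tuple s) j = f.
  have [j [lt_js nth_j]] : exists j, j < size s /\ nth f s j = f.
    elim: s {s_all} (s_all f) => //= g s IHs [->|/IHs [j [lt_js nth_j]]].
      by exists 0.
    by exists j.+1.
  by exists (Ordinal lt_js); rewrite (tnth_nth f).
have [i iP] := choice _ idx.
by exists (size s), (tnth (in_tuple s)), i.
Qed.

Section Colourings.
Variable K : category.

Lemma is_aut_id (A : Ob K) : is_aut (idm A).
Proof. by exists (idm A); rewrite comp_id_l. Qed.

Definition aut_invariant_fun (T : Type) (A C : Ob K) (chi : Hom A C -> T) :=
  forall (f : Hom A C) (a : Hom A A), is_aut a -> chi (comp f a) = chi f.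

(** [admissible false] accepts every colouring, [admissible true] only the
    colourings of binom(C, A); so [arrowsT false] and [arrowsT true] are
    [arrows] and [arrows_sim] for an arbitrary finite set of colours. *)
Definition admissible (sim : bool) (T : Type) (A C : Ob K)
    (chi : Hom A C -> T) :=
  sim -> aut_invariant_fun chi.

Definition arrowsT (sim : bool) (C B A : Ob K) (T : finType) (t : nat) :=
  forall chi : Hom A C -> T, admissible sim chi ->
    exists w : Hom B C, exists S : {set T},
      #|S| <= t /\ forall f : Hom A B, chi (comp w f) \in S.

Definition ramsey (sim : bool) (A : Ob K) (t : nat) :=
  forall k, 2 <= k -> forall B : Ob K,
    exists C : Ob K, arrowsT sim C B A 'I_k t.

Lemma ramsey_propE (A : Ob K) t : ramsey_prop A t <-> ramsey false A t.
Proof.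
split=> R k k2 B; have [C HC] := R k k2 B; exists C => chi.
  by move=> _; apply: HC.
by apply: HC.
Qed.

Lemma ramsey_prop_simE (A : Ob K) t : ramsey_prop_sim A t <-> ramsey true A t.
Proof.
split=> R k k2 B; have [C HC] := R k k2 B; exists C => chi chi_inv.
  by apply: HC; apply: chi_inv.
by apply: HC.
Qed.

Lemma admissible_ffun sim (I : finType) (T : Type) (A C : Ob K)
    (F : I -> Hom A C -> T) :
  (forall x, admissible sim (F x)) ->
  admissible sim (fun f => [ffun x => F x f]).
Proof. by move=> FA s f a aut_a; apply/ffunP => x; rewrite !ffunE FA. Qed.

Lemma arrowsT_cancel sim (C B A : Ob K) (T T' : finType) (enc : T -> T')
    (dec : T' -> T) t :
  cancel enc dec -> arrowsT sim C B A T' t -> arrowsT sim C B A T t.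
Proof.
move=> encK arrT' chi chi_adm.
have [|w [S [le_St chiS]]] := arrT' (enc \o chi).
  by move=> s f a aut_a; rewrite /= chi_adm.
exists w, (dec @: S); split; first exact: leq_trans (leq_imset_card _ _) le_St.
by move=> f; rewrite -[chi _]encK; apply: imset_f; apply: chiS.
Qed.

Lemma ramsey_finType sim (A : Ob K) t : ramsey sim A t ->
  forall (T : finType), T -> forall B, exists C, arrowsT sim C B A T t.
Proof.
move=> R T x0 B; have [C arrC] := R #|T|.+2 isT B; exists C.
apply: (@arrowsT_cancel _ _ _ _ _ _ (fun x => inord (index x (enum T)))
                                     (fun i => nth x0 (enum T) i)) arrC => x.
by rewrite inordK ?nth_index ?mem_enum // cardE ltnS leqW ?index_size.
Qed.

End Colourings.

Section Product.
Variables (C1 C2 : category) (sim : bool).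
Local Notation C12 := (prod_cat C1 C2).

Lemma is_aut_pair (A1 : Ob C1) (A2 : Ob C2) (a1 : Hom A1 A1) (a2 : Hom A2 A2) :
  is_aut a1 -> is_aut a2 -> @is_aut C12 (A1, A2) (a1, a2).
Proof.
move=> [b1 [ab1 ba1]] [b2 [ab2 ba2]]; exists (b1, b2).
by rewrite /= /prod_comp /= ab1 ab2 ba1 ba2.
Qed.

Section Slices.
Variables (A1 C1' : Ob C1) (A2 C2' : Ob C2) (T : Type).
Variable chi : @Hom C12 (A1, A2) (C1', C2') -> T.
Hypothesis chi_adm : admissible sim chi.

Lemma admissible_slice_l (g : Hom A2 C2') :
  admissible sim (fun f => chi (f, g)).
Proof.
move=> s f a aut_a; have := chi_adm s (f, g) (is_aut_pair aut_a (is_aut_id A2)).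
by rewrite /= /prod_comp /= comp_id_r.
Qed.

Lemma admissible_slice_r (f : Hom A1 C1') :
  admissible sim (fun g => chi (f, g)).
Proof.
move=> s g a aut_a; have := chi_adm s (f, g) (is_aut_pair (is_aut_id A1) aut_a).
by rewrite /= /prod_comp /= comp_id_r.
Qed.

End Slices.

Lemma arrowsT_prod (A1 B1 C1' : Ob C1) (A2 B2 C2' : Ob C2) (T : finType) n1 n2 m
    (e : 'I_m -> Hom A1 C1') (i : Hom A1 C1' -> 'I_m) :
  cancel i e -> T ->
  arrowsT sim C1' B1 A1 {ffun 'I_n2 -> T} n1 ->
  arrowsT sim C2' B2 A2 {ffun 'I_m -> T} n2 ->
  @arrowsT C12 sim (C1', C2') (B1, B2) (A1, A2) T (n1 * n2).
Proof.
move=> ie o arr1 arr2 chi chi_adm.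
pose chi2 g := [ffun x => chi (e x, g)].
have chi2E f g : chi (f, g) = chi2 g (i f) by rewrite ffunE ie.
have [w2 [S2 [le_S2n2 chi2S]]] :=
  arr2 chi2 (admissible_ffun (fun x => admissible_slice_r chi_adm (e x))).
have [rep repP] := bounded_image_representatives le_S2n2 chi2S.
pose chi1_at j f := if rep j is Some g then chi (f, comp w2 g) else o.
have chi1_adm j : admissible sim (chi1_at j).
  by rewrite /chi1_at; case: (rep j) => // g; apply: admissible_slice_l.
have [w1 [S1 [le_S1n1 chi1S]]] := arr1 _ (admissible_ffun chi1_adm).
exists (w1, w2), [set (F : {ffun 'I_n2 -> T}) j | F in S1, j in [set: 'I_n2]].
split.
  apply: leq_trans (leq_imset2_card _ _ _) _.
  by rewrite cardsT card_ord leq_mul.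
move=> [f g]; have [j] := repP g.
case rep_j: (rep j) => [g'|] //= [chi2_g'g].
have -> : chi (comp w1 f, comp w2 g) = [ffun j => chi1_at j (comp w1 f)] j.
  by rewrite ffunE /chi1_at rep_j !chi2E chi2_g'g.
exact: imset2_f (chi1S f) (in_setT j).
Qed.

Lemma ramsey_prod (A1 : Ob C1) (A2 : Ob C2) n1 n2 :
  finite_homs C1 -> ramsey sim A1 n1 -> ramsey sim A2 n2 ->
  @ramsey C12 sim (A1, A2) (n1 * n2).
Proof.
move=> finC1 R1 R2 k k_ge2 [B1 B2]; have o : 'I_k := Ordinal (ltnW k_ge2).
have [C1' arr1] := ramsey_finType R1 ([ffun=> o] : {ffun 'I_n2 -> 'I_k}) B1.
have [m [e [i ie]]] := finite_homs_index finC1 A1 C1'.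
have [C2' arr2] := ramsey_finType R2 ([ffun=> o] : {ffun 'I_m -> 'I_k}) B2.
by exists (C1', C2'); apply: arrowsT_prod ie o arr1 arr2.
Qed.

End Product.

Theorem theorem3p3 (C1 C2 : category) :
  all_mono C1 -> all_mono C2 ->
  finite_homs C1 -> finite_homs C2 ->
  (forall A : Ob C1, exists n, is_t A n) ->
  (forall A : Ob C2, exists n, is_t A n) ->
  forall (A1 : Ob C1) (A2 : Ob C2),
    (forall n1 n2, is_t A1 n1 -> is_t A2 n2 ->
       exists n, @is_t (prod_cat C1 C2) (A1, A2) n /\ n <= n1 * n2) /\
    (forall n1 n2, is_t_sim A1 n1 -> is_t_sim A2 n2 ->
       exists n, @is_t_sim (prod_cat C1 C2) (A1, A2) n /\ n <= n1 * n2).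
Proof.
move=> _ _ finC1 _ _ _ A1 A2.
split=> n1 n2 [n1_gt0 [R1 _]] [n2_gt0 [R2 _]];
  have N_gt0 : 0 < n1 * n2 by rewrite muln_gt0 n1_gt0.
- have R : @ramsey_prop (prod_cat C1 C2) (A1, A2) (n1 * n2).
    by apply/ramsey_propE/ramsey_prod => //; apply/ramsey_propE.
  exact: exists_least_pos_le N_gt0 R.
- have R : @ramsey_prop_sim (prod_cat C1 C2) (A1, A2) (n1 * n2).
    by apply/ramsey_prop_simE/ramsey_prod => //; apply/ramsey_prop_simE.
  exact: exists_least_pos_le N_gt0 R.
Qed.
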